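(* Let $E$ be a finite set and $p$ the transition matrix of an irreducible time-homogeneous Markov chain on $E$ admitting a reversible probability measure $\mu$ (i.e. $p(x,y)\mu(x)=p(y,x)\mu(y)$ for all $x,y$). Let $d$ be the graph distance on $E$ for the graph in which $x,y$ are joined by an edge iff $p(x,y)>0$. Let $L=p-I$ and let $0=\lambda^{(0)}\leq\lambda^{(1)}\leq\cdots$ be the eigenvalues of the symmetric nonnegative operator $-L$ on $L^2(\mu)$, in increasing order counted with multiplicity. Then for any $k\geq1$ and all sets $A_1,\ldots,A_k\subset E$ with $\min_{i\neq j}d(A_i,A_j)\geq 1$ and $(\mu(A_1),\ldots,\mu(A_k))\in\Delta_k$, the set $B=A_1\cup\cdots\cup A_k$ satisfies \[ \mu(B_n)\geq 1-(1-\mu(B))\left(1+\lambda^{(k)}\right)^{-n} \] for all integers $1\leq n\leq\frac12\min_{i\neq j}d(A_i,A_j)$.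
   Context: For $A,B\subset E$, $d(A,B)=\min\{d(x,y):x\in A,y\in B\}$. For $B\subset E$ and an integer $n\geq1$, $B_n=\{x\in E: d(x,B)\leq n\}$ (the graph $n$-neighbourhood of $B$). For $k\geq1$, $\Delta_k$ is the set of $(a_1,\ldots,a_k)\in[0,1]^k$ with $\sum_{j=1}^k a_j\leq1$ and $a_i+\sum_{j=1}^k a_j\geq1$ for every $i$. *)

From HB Require Import structures.
From mathcomp Require Import all_boot all_order all_algebra.
From mathcomp Require Import reals.
Set Implicit Arguments. Unset Strict Implicit. Unset Printing Implicit Defensive.
Import Order.TTheory GRing.Theory Num.Theory.
Local Open Scope ring_scope.

Section MarkovDefs.
Variables (R : realType) (E : finType).

Definition prel (p : E -> E -> R) : rel E := fun x y => 0 < p x y.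

Definition irreducible (p : E -> E -> R) : Prop :=
  forall x y, connect (prel p) x y.

Fixpoint reachn (p : E -> E -> R) (m : nat) (x y : E) : bool :=
  if m is m'.+1 then [exists z, reachn p m' x z && prel p z y] else x == y.

(* graph distance: length of a shortest path (shortest paths have length
   < #|E|); the default #|E| is only used for unreachable pairs, which do not
   occur for an irreducible chain. *)
Definition gdist (p : E -> E -> R) (x y : E) : nat :=
  \big[minn/#|E|]_(m < #|E| | reachn p m x y) m.

Definition nbhd (p : E -> E -> R) (B : {set E}) (n : nat) : {set E} :=
  [set x | [exists b in B, gdist p x b <= n]%N].

Definition msr (mu : E -> R) (A : {set E}) : R := \sum_(x in A) mu x.

Definition negL (p : E -> E -> R) : 'M[R]_#|E| :=
  \matrix_(i, j) ((i == j)%:R - p (enum_val i) (enum_val j)).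
End MarkovDefs.

Definition inDelta (R : realType) (k : nat) (a : 'I_k -> R) : Prop :=
  (forall i, 0 <= a i <= 1) /\ (\sum_i a i <= 1) /\
  (forall i, 1 <= a i + \sum_j a j).

(* For m < n, the k + 1 sets (A_i)_m and E \ B_(m+1) are pairwise at graph
   distance at least 2, so their indicators are orthogonal and
   (I - p)-orthogonal in L^2(mu).  The Rayleigh quotient of an indicator is
   the flow leaving the set, which crosses the shell B_(m+1) \ B_m, and the
   Delta_k condition gives each of these sets mass at least mu(E \ B_(m+1)).
   The min-max principle then yields
     lambda_k mu(E \ B_(m+1)) <= mu(B_(m+1) \ B_m),
   i.e. (1 + lambda_k) (1 - mu(B_(m+1))) <= 1 - mu(B_m), and n iterations give
   the bound.  The min-max principle is proved for any matrix self-adjoint for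
   a positive weighted inner product: it has a squarefree annihilating
   polynomial, hence an eigenbasis, and its eigenvectors for distinct
   eigenvalues are orthogonal. *)

From HB Require Import structures.
From mathcomp Require Import all_boot all_order all_algebra.
From mathcomp Require Import reals.
From mathcomp Require Import ring lra zify.
Set Implicit Arguments. Unset Strict Implicit. Unset Printing Implicit Defensive.
Import Order.TTheory GRing.Theory Num.Theory.
Local Open Scope ring_scope.

Section WeightedDot.
Variables (R : realFieldType) (n : nat) (w : 'I_n -> R).

Definition wdot (u v : 'rV[R]_n) : R := \sum_i w i * (u 0 i * v 0 i).

Lemma wdotC u v : wdot u v = wdot v u.
Proof. by apply: eq_bigr => i _; rewrite [u 0 i * _]mulrC. Qed.

Lemma wdotDl u v z : wdot (u + v) z = wdot u z + wdot v z.
Proof.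
by rewrite /wdot -big_split; apply: eq_bigr => i _; rewrite !mxE mulrDl mulrDr.
Qed.

Lemma wdotZl a u v : wdot (a *: u) v = a * wdot u v.
Proof. by rewrite /wdot mulr_sumr; apply: eq_bigr => i _; rewrite !mxE; ring. Qed.

Lemma wdotZr a u v : wdot u (a *: v) = a * wdot u v.
Proof. by rewrite wdotC wdotZl wdotC. Qed.

Lemma wdot0l v : wdot 0 v = 0.
Proof. by rewrite -(scale0r 0) wdotZl mul0r. Qed.

Lemma wdotBl u v z : wdot (u - v) z = wdot u z - wdot v z.
Proof. by rewrite wdotDl -scaleN1r wdotZl mulN1r. Qed.

Lemma wdot_suml (I : Type) (s : seq I) (P : pred I) (F : I -> 'rV_n) v :
  wdot (\sum_(i <- s | P i) F i) v = \sum_(i <- s | P i) wdot (F i) v.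
Proof.
by apply: (big_morph (wdot^~ v)) => [a b|]; rewrite ?wdotDl ?wdot0l.
Qed.

Lemma wdot_sumr (I : Type) (s : seq I) (P : pred I) (F : I -> 'rV_n) v :
  wdot v (\sum_(i <- s | P i) F i) = \sum_(i <- s | P i) wdot v (F i).
Proof. by rewrite wdotC wdot_suml; apply: eq_bigr => i _; rewrite wdotC. Qed.

Lemma wdot_sum_orthogonal (I : eqType) (s : seq I) (u v : I -> 'rV_n) :
  uniq s -> {in s &, forall a b, a != b -> wdot (u a) (v b) = 0} ->
  wdot (\sum_(a <- s) u a) (\sum_(b <- s) v b) = \sum_(a <- s) wdot (u a) (v a).
Proof.
move=> s_uniq uv0; rewrite wdot_suml big_seq [RHS]big_seq.
apply: eq_bigr => a a_s; rewrite wdot_sumr (bigD1_seq a) //= big_seq_cond.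
by rewrite big1 ?addr0 // => b /andP[b_s ba]; rewrite uv0 // eq_sym.
Qed.

Hypothesis w_gt0 : forall i, 0 < w i.

Lemma wdot_ge0 u : 0 <= wdot u u.
Proof.
by apply: sumr_ge0 => i _; apply: mulr_ge0; [exact: ltW | rewrite -expr2 sqr_ge0].
Qed.

Lemma wdot_eq0 u : (wdot u u == 0) = (u == 0).
Proof.
apply/idP/eqP => [|->]; last by rewrite wdot0l.
rewrite psumr_eq0 => [/allP u0|i _]; last first.
  by apply: mulr_ge0; [exact: ltW | rewrite -expr2 sqr_ge0].
apply/rowP => i; rewrite mxE; apply/eqP.
by have := u0 i (mem_index_enum i); rewrite /= mulf_eq0 (gt_eqF (w_gt0 i)) mulf_eq0 orbb.
Qed.

Lemma wdot_gt0 u : u != 0 -> 0 < wdot u u.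
Proof. by rewrite lt_def wdot_ge0 wdot_eq0 andbT. Qed.

Lemma orthogonal_comb_eq0 (T : finType) (g : T -> 'rV_n) (c : T -> R) :
  (forall a, g a != 0) -> (forall a b, a != b -> wdot (g a) (g b) = 0) ->
  \sum_a c a *: g a = 0 -> forall a, c a = 0.
Proof.
move=> g_neq0 g_orth /(congr1 (wdot^~ (g _))) comb0 a; move/(_ a): comb0.
rewrite wdot0l wdot_suml (bigD1 a) //= big1 ?addr0 => [|b ba]; last first.
  by rewrite wdotZl g_orth ?mulr0.
by move/eqP; rewrite wdotZl mulf_eq0 wdot_eq0 (negbTE (g_neq0 a)) orbF => /eqP.
Qed.

End WeightedDot.

Lemma char_poly_trmx (F : fieldType) n (A : 'M[F]_n) : char_poly A^T = char_poly A.
Proof.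
rewrite /char_poly -det_tr; congr (\det _).
by apply/matrixP => i j; rewrite !mxE eq_sym.
Qed.

Lemma char_poly_uconj (F : fieldType) n (V A : 'M[F]_n) :
  V \in unitmx -> char_poly (conjmx V A) = char_poly A.
Proof.
move=> V_unit; rewrite conjumx // /char_poly.
have -> : char_poly_mx (V *m A *m invmx V) =
    map_mx polyC V *m char_poly_mx A *m map_mx polyC (invmx V).
  rewrite /char_poly_mx mulmxBr mulmxBl !map_mxM mul_mx_scalar -scalemxAl.
  have -> : map_mx polyC V *m map_mx polyC (invmx V) = 1%:M.
    by rewrite -map_mxM mulmxV // map_mx1.
  by rewrite scalemx1.
rewrite !det_mulmx !det_map_mx mulrC mulrA -rmorphM -det_mulmx.
by rewrite mulVmx // det1 rmorph1 mul1r.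
Qed.

Lemma big_undup_partition (V : nmodType) (I : finType) (T : eqType)
    (d : I -> T) (F : I -> V) :
  \sum_i F i = \sum_(a <- undup [seq d i | i <- enum I]) \sum_(i | d i == a) F i.
Proof.
under [RHS]eq_bigr do rewrite big_mkcond.
rewrite exchange_big /=; apply: eq_bigr => i _.
rewrite (bigD1_seq (d i)) ?undup_uniq ?mem_undup ?map_f //= ?enumT ?mem_index_enum //.
by rewrite eqxx big1 ?addr0 // => a ai; rewrite eq_sym (negbTE ai).
Qed.

Lemma count_le_sorted_nth (R : realDomainType) (s : seq R) k r :
  sorted <=%R s -> (k < size s)%N -> r < nth 0 s k ->
  (count (fun a => (a <= r)%R) s <= k)%N.
Proof.
move=> s_sorted ks r_lt; rewrite -(cat_take_drop k s) count_cat.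
have -> : count (fun a => a <= r) (drop k s) = 0%N.
  apply/eqP; rewrite -leqn0 leqNgt -has_count; apply/hasPn => x /(nthP 0) [j].
  rewrite size_drop nth_drop ltn_subRL => j_lt <-; rewrite -ltNge.
  apply: lt_le_trans r_lt _.
  by apply: sorted_leq_nth; rewrite ?inE ?leq_addr //; exact: le_trans.
have := count_size (fun a => (a <= r)%R) (take k s); rewrite size_take ks; lia.
Qed.

Lemma exists_vanishing_comb (F : fieldType) m n (M : 'M[F]_(m, n)) (J : {set 'I_n}) :
  (#|J| < m)%N -> exists2 c : 'rV_m, c != 0 & forall i, i \in J -> (c *m M) 0 i = 0.
Proof.
move=> J_lt; pose H := colsub (enum_val : 'I_#|J| -> 'I_n) M.
exists (nz_row (kermx H)).
  rewrite nz_row_eq0 -mxrank_eq0 mxrank_ker subn_eq0 -ltnNge.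
  exact: leq_ltn_trans (rank_leq_col H) J_lt.
move=> i iJ; have /sub_kermxP := nz_row_sub (kermx H).
rewrite mulmx_colsub => /matrixP /(_ 0 (enum_rank_in iJ i)).
by rewrite !mxE enum_rankK_in.
Qed.

Definition selfadjoint (R : realFieldType) n (w : 'I_n -> R) (A : 'M[R]_n) :=
  forall u v, wdot w (u *m A) v = wdot w u (v *m A).

Section Rayleigh.
Variables (R : realFieldType) (n : nat) (w : 'I_n -> R) (A : 'M[R]_n).

Lemma rayleigh_le_orthogonal_comb (T : finType) (g : T -> 'rV_n) (c : T -> R) r x :
  (forall a b, a != b -> wdot w (g a) (g b) = 0) ->
  (forall a b, a != b -> wdot w (g a *m A) (g b) = 0) ->
  (forall a, wdot w (g a *m A) (g a) <= r * wdot w (g a) (g a)) ->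
  x = \sum_a c a *: g a -> wdot w (x *m A) x <= r * wdot w x x.
Proof.
move=> g_orth gA_orth g_ray ->; rewrite mulmx_suml.
under eq_bigr do rewrite -scalemxAl.
rewrite !wdot_sum_orthogonal ?index_enum_uniq // => [|a b _ _ ab|a b _ _ ab];
  rewrite ?wdotZl ?wdotZr ?g_orth ?gA_orth ?mulr0 //.
rewrite mulr_sumr; apply: ler_sum => a _; rewrite !wdotZl !wdotZr.
have := g_ray a; have := sqr_ge0 (c a); nra.
Qed.

Hypotheses (w_gt0 : forall i, 0 < w i) (A_sa : selfadjoint w A).

Lemma selfadjoint_eigen_orthogonal u v a b :
  u *m A = a *: u -> v *m A = b *: v -> a != b -> wdot w u v = 0.
Proof.
move=> uA vA ab; have : a * wdot w u v = b * wdot w u v.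
  by rewrite -wdotZl -uA A_sa vA wdotZr.
by move/eqP; rewrite -subr_eq0 -mulrBl mulf_eq0 subr_eq0 (negbTE ab) => /eqP.
Qed.

Lemma rayleigh_gt_eigen_sum (s : seq R) (v : R -> 'rV_n) r x :
  uniq s -> (forall a, v a *m A = a *: v a) -> (forall a, a <= r -> v a = 0) ->
  x = \sum_(a <- s) v a -> x != 0 -> r * wdot w x x < wdot w (x *m A) x.
Proof.
move=> s_uniq vA v0 x_def x_neq0.
have [a0 a0s va0_neq0] : exists2 a0, a0 \in s & v a0 != 0.
  apply/hasP; apply: contraNT x_neq0 => /hasPn v_eq0.
  by rewrite x_def big_seq big1 // => a /v_eq0 /negPn /eqP.
have gap a : 0 <= wdot w (a *: v a) (v a) - r * wdot w (v a) (v a).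
  rewrite wdotZl -mulrBl; case: (leP a r) => [/v0 ->|ar]; first by rewrite wdot0l mulr0.
  by rewrite mulr_ge0 ?subr_ge0 ?(ltW ar) ?wdot_ge0.
have gap0 : 0 < wdot w (a0 *: v a0) (v a0) - r * wdot w (v a0) (v a0).
  rewrite wdotZl -mulrBl mulr_gt0 ?wdot_gt0 // subr_gt0 ltNge.
  by apply: contra va0_neq0 => /v0 ->.
rewrite x_def mulmx_suml (eq_bigr _ (fun a _ => vA a)).
have v_orth a b : a != b -> wdot w (v a) (v b) = 0.
  exact: selfadjoint_eigen_orthogonal (vA a) (vA b).
rewrite !wdot_sum_orthogonal // => [|a b _ _ ab|a b _ _ ab];
  rewrite ?wdotZl ?v_orth ?mulr0 //.
rewrite mulr_sumr -subr_gt0 -sumrB (bigD1_seq a0) //=.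
have := @sumr_ge0 _ _ s (fun a => a != a0) _ (fun a _ => gap a); lra.
Qed.

End Rayleigh.

Section SelfAdjointDiagonalization.
Variables (R : realFieldType) (n' : nat).
Local Notation n := n'.+1.
Variables (w : 'I_n -> R) (A : 'M[R]_n).
Hypotheses (w_gt0 : forall i, 0 < w i) (A_sa : selfadjoint w A).

Lemma selfadjointB_scalar a : selfadjoint w (A - a%:M).
Proof.
move=> u v; rewrite !mulmxBr !mul_mx_scalar wdotBl wdotZl A_sa.
by rewrite [RHS]wdotC wdotBl wdotZl [wdot w (v *m A) u]wdotC [wdot w v u]wdotC.
Qed.

(* If [v] is a row of [q(A)], then [|v (A - a)|^2 = <v (A - a)^2, v> = 0]. *)
Lemma horner_mx_XsubC_sqr (q : {poly R}) a :
  horner_mx A (q * ('X - a%:P) ^+ 2) = 0 -> horner_mx A (q * ('X - a%:P)) = 0.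
Proof.
rewrite !rmorphM /= !rmorphB /= !horner_mx_X !horner_mx_C => qA0.
apply/row_matrixP => i; rewrite row0; apply/eqP; rewrite -(wdot_eq0 w_gt0).
rewrite -mulmxE row_mul selfadjointB_scalar -!row_mul -mulmxA !mulmxE.
by rewrite -expr2 qA0 row0 wdotC wdot0l.
Qed.

Lemma annihilating_uniq_roots (s : seq R) (q : {poly R}) :
  horner_mx A (q * \prod_(a <- s) ('X - a%:P)) = 0 ->
  exists2 rs, uniq rs & horner_mx A (q * \prod_(a <- rs) ('X - a%:P)) = 0.
Proof.
elim: s q => [|a s IHs] q; first by exists [::].
rewrite big_cons mulrA => /IHs [rs rs_uniq qrsA0].
have [a_rs|a_rs] := boolP (a \in rs); last first.
  by exists (a :: rs); rewrite /= ?a_rs // big_cons mulrA.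
exists rs => //; move: qrsA0; rewrite (perm_big _ (perm_to_rem a_rs)) big_cons /=.
set t := \prod_(b <- rem a rs) _ => qtA0.
have : horner_mx A (q * t * ('X - a%:P) ^+ 2) = 0.
  by rewrite -qtA0; congr horner_mx; ring.
by move/horner_mx_XsubC_sqr; rewrite -mulrA [t * _]mulrC.
Qed.

Lemma selfadjoint_eigenbasis (s : seq R) :
  char_poly A = \prod_(a <- s) ('X - a%:P) ->
  exists2 P : 'M[R]_n, P \in unitmx & exists d : 'rV[R]_n,
    (forall i, row i P *m A = d 0 i *: row i P) /\
    perm_eq s [seq d 0 i | i <- enum 'I_n].
Proof.
move=> charA; have [rs rs_uniq] : exists2 rs, uniq rs &
    horner_mx A (1 * \prod_(a <- rs) ('X - a%:P)) = 0.
  by apply: (annihilating_uniq_roots (s := s)); rewrite mul1r -charA Cayley_Hamilton.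
rewrite mul1r => rsA0.
have [|P P_unit /(similar_diagLR P_unit) [d A_def]] := (diagonalizableP A).2.
  by exists rs => //; exact: mxminpoly_min.
exists P => //; exists d; split=> [i|].
  have PA : P *m A = diag_mx d *m P by rewrite A_def conjVmx // !mulmxA mulmxV // mul1mx.
  by rewrite -row_mul PA row_mul row_diag_mx -scalemxAl -rowE.
apply: prod_XsubC_eq; rewrite -charA A_def char_poly_uconj ?unitmx_inv //.
rewrite char_poly_trig ?diag_mx_is_trig // big_map big_enum /=.
by apply: eq_bigr => i _; rewrite mxE eqxx mulr1n.
Qed.

End SelfAdjointDiagonalization.

(* Min-max principle: the [f a] span a space of dimension [#|T| > k] on which
   the Rayleigh quotient is at most [r]; if [lambda_k > r], that space meets
   the span of the eigenvectors of eigenvalue [> r], where it exceeds [r]. *)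
Lemma eigenvalue_le_rayleigh (R : realFieldType) n (w : 'I_n -> R) (A : 'M[R]_n)
    (lam : seq R) (T : finType) (f : T -> 'rV[R]_n) k r :
  (forall i, 0 < w i) -> selfadjoint w A ->
  sorted <=%R lam -> char_poly A = \prod_(a <- lam) ('X - a%:P) ->
  (k < size lam)%N -> (k < #|T|)%N -> (forall a, f a != 0) ->
  (forall a b, a != b -> wdot w (f a) (f b) = 0) ->
  (forall a b, a != b -> wdot w (f a *m A) (f b) = 0) ->
  (forall a, wdot w (f a *m A) (f a) <= r * wdot w (f a) (f a)) ->
  nth 0 lam k <= r.
Proof.
move=> w_gt0 A_sa lam_sorted charA k_lam k_T f_neq0 f_orth fA_orth f_ray.
have lam_size : size lam = n.
  by have := size_char_poly A; rewrite charA size_prod_XsubC => -[].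
case: n => [|n'] in w A f w_gt0 A_sa charA f_neq0 f_orth fA_orth f_ray lam_size *.
  by rewrite lam_size in k_lam.
rewrite leNgt; apply/negP => r_lt.
have [P P_unit [d [P_eigen lam_perm]]] := selfadjoint_eigenbasis w_gt0 A_sa charA.
pose J := [set i | d 0 i <= r].
have J_le : (#|J| <= k)%N.
  have -> : #|J| = count (fun a => (a <= r)%R) lam.
    rewrite (permP lam_perm) count_map cardE /enum_mem size_filter count_filter.
    by apply: eq_count => i; rewrite /= inE andbT.
  exact: count_le_sorted_nth.
pose g (j : 'I_#|T|) := f (enum_val j).
have g_orth a b : a != b -> wdot w (g a) (g b) = 0.
  by move=> ab; apply: f_orth; rewrite (inj_eq enum_val_inj).
have gA_orth a b : a != b -> wdot w (g a *m A) (g b) = 0.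
  by move=> ab; apply: fA_orth; rewrite (inj_eq enum_val_inj).
pose F := \matrix_(j, i) g j 0 i.
have [c c_neq0 cJ0] := exists_vanishing_comb (F *m invmx P) (leq_ltn_trans J_le k_T).
set x := c *m F.
have x_comb : x = \sum_j c 0 j *: g j.
  rewrite /x mulmx_sum_row; apply: eq_bigr => j _; congr (_ *: _).
  by apply/rowP => i; rewrite !mxE.
have x_neq0 : x != 0.
  apply: contraNneq c_neq0 => x0; apply/eqP/rowP => j; rewrite mxE.
  by apply: (orthogonal_comb_eq0 w_gt0 (fun j => f_neq0 _) g_orth); rewrite -x_comb.
have x_le := rayleigh_le_orthogonal_comb g_orth gA_orth (fun j => f_ray _) x_comb.
pose y := x *m invmx P.
pose v a := \sum_(i | d 0 i == a) y 0 i *: row i P.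
have x_eigen_sum : x = \sum_(a <- undup [seq d 0 i | i <- enum 'I_n'.+1]) v a.
  by rewrite -big_undup_partition -mulmx_sum_row /y mulmxKV.
have vA a : v a *m A = a *: v a.
  rewrite mulmx_suml scaler_sumr; apply: eq_bigr => i /eqP dia.
  by rewrite -scalemxAl P_eigen scalerA mulrC -scalerA dia.
have v0 a : a <= r -> v a = 0.
  move=> ar; rewrite /v big1 // => i /eqP dia.
  by rewrite /y /x -mulmxA cJ0 ?scale0r // inE dia.
have := rayleigh_gt_eigen_sum w_gt0 A_sa (undup_uniq _) vA v0 x_eigen_sum x_neq0.
by rewrite ltNge x_le.
Qed.

Lemma big_minn_le (I : eqType) (s : seq I) (P : pred I) (F : I -> nat) m0 j :
  j \in s -> P j -> (\big[minn/m0]_(i <- s | P i) F i <= F j)%N.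
Proof.
elim: s => //= a s IHs; rewrite in_cons big_cons => /orP[/eqP <- -> | js Pj].
  exact: geq_minl.
by case: ifP => _; [apply: leq_trans (geq_minr _ _) (IHs js Pj) | apply: IHs].
Qed.

Section GraphDistance.
Variables (R : realType) (E : finType) (p : E -> E -> R).

Lemma reachn_cat m1 m2 x y z :
  reachn p m1 x y -> reachn p m2 y z -> reachn p (m1 + m2) x z.
Proof.
elim: m2 z => [|m2 IHm2] z xy /=; first by move/eqP <-; rewrite addn0.
case/existsP => t /andP[yt tz]; rewrite addnS /=; apply/existsP; exists t.
by rewrite IHm2.
Qed.

Lemma reachn1 x y : prel p x y -> reachn p 1 x y.
Proof. by move=> xy; apply/existsP; exists x; rewrite eqxx. Qed.

Lemma reachn_path x s : path (prel p) x s -> reachn p (size s) x (last x s).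
Proof.
elim: s x => [|y s IHs] x /=; first by rewrite eqxx.
by case/andP => xy ys; apply: (reachn_cat (m1 := 1)); [apply: reachn1 | apply: IHs].
Qed.

Lemma gdist_le_card x y : (gdist p x y <= #|E|)%N.
Proof.
rewrite /gdist; elim/big_ind: _ => // [a b a_le _|i _]; last exact: ltnW.
exact: leq_trans (geq_minl a b) a_le.
Qed.

Lemma gdist_le m x y : reachn p m x y -> (gdist p x y <= m)%N.
Proof.
move=> xy; have [m_lt|m_ge] := ltnP m #|E|; last first.
  exact: leq_trans (gdist_le_card x y) m_ge.
rewrite /gdist (@big_minn_le _ _ _ (fun i : 'I_#|E| => nat_of_ord i) _ (Ordinal m_lt)) //.
exact: mem_index_enum.
Qed.

Lemma gdistxx x : gdist p x x = 0%N.
Proof. by apply/eqP; rewrite -leqn0; apply: gdist_le; rewrite /= eqxx. Qed.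

Lemma gdist_prel x y : prel p x y -> (gdist p x y <= 1)%N.
Proof. by move/reachn1/gdist_le. Qed.

Hypothesis p_irr : irreducible p.

Lemma reachn_gdist x y : reachn p (gdist p x y) x y.
Proof.
have [m m_lt xy] : exists2 m, (m < #|E|)%N & reachn p m x y.
  have /connectP [s xs ->] := p_irr x y.
  have [s' xs' s'_uniq _] := shortenP xs.
  exists (size s'); last exact: reachn_path.
  by move/card_uniqP: s'_uniq => /= <-; apply: max_card.
have : (gdist p x y == #|E|) || reachn p (gdist p x y) x y.
  rewrite /gdist; elim/big_ind: _ => [|a b a_ok b_ok|i ->]; rewrite ?eqxx ?orbT //.
  by rewrite /minn; case: ifP.
case/orP => // /eqP gdist_card; have := gdist_le xy.
by rewrite gdist_card leqNgt m_lt.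
Qed.

Lemma gdist_triangle x y z : (gdist p x z <= gdist p x y + gdist p y z)%N.
Proof. exact/gdist_le/reachn_cat/reachn_gdist/reachn_gdist. Qed.

Hypothesis p_sym : forall x y, prel p x y -> prel p y x.

Lemma reachn_sym m x y : reachn p m x y -> reachn p m y x.
Proof.
elim: m y => [|m IHm] y; first by rewrite /= eq_sym.
case/existsP => z /andP[xz zy]; suff : reachn p (1 + m) y x by [].
by apply: (reachn_cat (y := z)); [apply/reachn1/p_sym | apply: IHm].
Qed.

Lemma gdistC x y : gdist p x y = gdist p y x.
Proof. by apply/eqP; rewrite eqn_leq !gdist_le // reachn_sym // reachn_gdist. Qed.

End GraphDistance.

Section Neighbourhoods.
Variables (R : realType) (E : finType) (p : E -> E -> R).
Hypotheses (p_irr : irreducible p) (p_sym : forall x y, prel p x y -> prel p y x).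

Lemma mem_nbhdP (S : {set E}) m x :
  reflect (exists2 b, b \in S & (gdist p x b <= m)%N) (x \in nbhd p S m).
Proof.
by rewrite inE; apply: (iffP existsP) => [[b /andP[]]|[b]]; exists b => //; apply/andP.
Qed.

Lemma subset_nbhd (S : {set E}) m : S \subset nbhd p S m.
Proof. by apply/subsetP => x xS; apply/mem_nbhdP; exists x; rewrite ?gdistxx. Qed.

Lemma nbhdS (S S' : {set E}) m : S \subset S' -> nbhd p S m \subset nbhd p S' m.
Proof.
move=> /subsetP SS'; apply/subsetP => x /mem_nbhdP [b /SS' bS' xb].
by apply/mem_nbhdP; exists b.
Qed.

Lemma le_nbhd (S : {set E}) m m' : (m <= m')%N -> nbhd p S m \subset nbhd p S m'.
Proof.
move=> le_mm'; apply/subsetP => x /mem_nbhdP [b bS xb].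
by apply/mem_nbhdP; exists b; rewrite // (leq_trans xb).
Qed.

Lemma nbhd_gdist (S : {set E}) m l y z :
  y \in nbhd p S m -> (gdist p z y <= l)%N -> z \in nbhd p S (l + m).
Proof.
move=> /mem_nbhdP [b bS yb] zy; apply/mem_nbhdP; exists b => //.
exact: leq_trans (gdist_triangle p_irr z y b) (leq_add zy yb).
Qed.

Lemma nbhd_bigcup (I : finType) (P : pred I) (A : I -> {set E}) m :
  nbhd p (\bigcup_(i | P i) A i) m = \bigcup_(i | P i) nbhd p (A i) m.
Proof.
apply/setP => x; apply/mem_nbhdP/bigcupP => [[b /bigcupP [i Pi bAi] xb]|[i Pi]].
  by exists i => //; apply/mem_nbhdP; exists b.
by case/mem_nbhdP => b bAi xb; exists b => //; apply/bigcupP; exists i.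
Qed.

Lemma nbhd_far (S S' : {set E}) n m x y :
  (forall a b, a \in S -> b \in S' -> (2 * n <= gdist p a b)%N) -> (m < n)%N ->
  x \in nbhd p S m -> y \in nbhd p S' m -> (2 <= gdist p x y)%N.
Proof.
move=> SS'_far m_lt /mem_nbhdP [a aS xa] /mem_nbhdP [b bS' yb].
have := SS'_far a b aS bS'; have := gdist_triangle p_irr a x b.
have := gdist_triangle p_irr x y b; have := gdistC p_irr p_sym a x; lia.
Qed.

End Neighbourhoods.

Section Measure.
Variables (R : realType) (E : finType) (mu : E -> R).
Hypotheses (mu_ge0 : forall x, 0 <= mu x) (mu_sum1 : \sum_x mu x = 1).

Lemma msr_ge0 (S : {set E}) : 0 <= msr mu S.
Proof. exact: sumr_ge0. Qed.

Lemma msr_setD (S S' : {set E}) :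
  S \subset S' -> msr mu (S' :\: S) = msr mu S' - msr mu S.
Proof.
by move=> /setIidPr SS'; rewrite /msr [in RHS](big_setID S) /= SS' addrAC subrr add0r.
Qed.

Lemma msr_le (S S' : {set E}) : S \subset S' -> msr mu S <= msr mu S'.
Proof. by move=> SS'; rewrite -subr_ge0 -msr_setD ?msr_ge0. Qed.

Lemma msr_setC (S : {set E}) : msr mu (~: S) = 1 - msr mu S.
Proof.
rewrite -mu_sum1 -setTD msr_setD ?subsetT //; congr (_ - _).
by apply: eq_bigl => x; rewrite inE.
Qed.

Lemma msr_le1 (S : {set E}) : msr mu S <= 1.
Proof. by rewrite -subr_ge0 -msr_setC msr_ge0. Qed.

Lemma msr_bigcup (I : finType) (A : I -> {set E}) :
  (forall i j, i != j -> [disjoint A i & A j]) ->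
  msr mu (\bigcup_i A i) = \sum_i msr mu (A i).
Proof. by move=> A_disj; rewrite /msr partition_disjoint_bigcup. Qed.

End Measure.

Definition indicator (R : realType) (E : finType) (X : {set E}) : 'rV[R]_#|E| :=
  \row_i (enum_val i \in X)%:R.

Lemma sum_enum_val (R : realType) (E : finType) (F : E -> R) :
  \sum_(i < #|E|) F (enum_val i) = \sum_x F x.
Proof. by rewrite -(big_enum_val F). Qed.

Lemma sum_mul_nat_mem (R : realType) (E : finType) (F : E -> R) (S : {set E}) :
  \sum_x F x * (x \in S)%:R = \sum_(x in S) F x.
Proof.
rewrite [RHS]big_mkcond; apply: eq_bigr => x _.
by case: (x \in S); rewrite ?mulr1 ?mulr0.
Qed.

Section ReversibleChain.
Variables (R : realType) (E : finType) (p : E -> E -> R) (mu : E -> R).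
Hypotheses (p_ge0 : forall x y, 0 <= p x y) (p_sum1 : forall x, \sum_y p x y = 1).
Hypotheses (p_irr : irreducible p) (mu_ge0 : forall x, 0 <= mu x).
Hypotheses (mu_sum1 : \sum_x mu x = 1) (p_rev : forall x y, p x y * mu x = p y x * mu y).

Local Notation w := (mu \o enum_val).
(* Row vectors act on the right, so [u *m L] is [(I - p) u]. *)
Local Notation L := (negL p)^T.

(* By reversibility, positivity of [mu] propagates along the edges of [p]. *)
Lemma mu_gt0 x : 0 < mu x.
Proof.
have [x0 mux0] : exists x0, 0 < mu x0.
  apply/existsP; apply: contraT; rewrite negb_exists => /forallP mu_le0.
  have : \sum_x mu x = 0.
    by apply: big1 => y _; apply/eqP; rewrite eq_le mu_ge0 andbT leNgt mu_le0.
  by rewrite mu_sum1 => /eqP; rewrite oner_eq0.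
have /connectP [s] := p_irr x0 x.
elim: s x0 mux0 => [|z s IHs] x0 mux0 /=; first by move=> _ ->.
case/andP => x0z zs; apply: IHs zs; have : 0 < p x0 z * mu x0 by rewrite mulr_gt0.
rewrite p_rev => pmu_gt0; rewrite lt_def mu_ge0 andbT.
by apply: contraTneq pmu_gt0 => ->; rewrite mulr0 ltxx.
Qed.

Lemma prel_sym x y : prel p x y -> prel p y x.
Proof.
rewrite /prel => xy; have : 0 < p x y * mu x by rewrite mulr_gt0 ?mu_gt0.
by rewrite p_rev pmulr_lgt0 ?mu_gt0.
Qed.

Lemma wdot_negL u v :
  wdot w (u *m L) v = \sum_i \sum_j w i * negL p i j * u 0 j * v 0 i.
Proof.
rewrite /wdot; apply: eq_bigr => i _; rewrite !mxE big_distrl big_distrr /=.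
by apply: eq_bigr => j _; rewrite !mxE; ring.
Qed.

Lemma negL_selfadjoint : selfadjoint w L.
Proof.
have wL i j : w i * negL p i j = w j * negL p j i.
  rewrite /= !mxE eq_sym; case: eqP => [->//|_].
  by rewrite !sub0r !mulrN mulrC p_rev mulrC.
move=> u v; rewrite [RHS]wdotC !wdot_negL [RHS]exchange_big /=.
by apply: eq_bigr => i _; apply: eq_bigr => j _; rewrite wL /=; ring.
Qed.

Lemma wdot_indicator (X Y : {set E}) :
  wdot w (indicator R X) (indicator R Y) = msr mu (X :&: Y).
Proof.
rewrite /wdot /msr -(@sum_mul_nat_mem R E) -(@sum_enum_val R E); apply: eq_bigr => i _.
by rewrite !mxE inE; case: (_ \in X); case: (_ \in Y); rewrite /= ?mulr1 ?mulr0.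
Qed.

Lemma indicator_negL (X : {set E}) j :
  (indicator R X *m L) 0 j = (enum_val j \in X)%:R - \sum_(z in X) p (enum_val j) z.
Proof.
rewrite mxE; under eq_bigr do rewrite !mxE mulrBr.
rewrite sumrB; congr (_ - _).
  rewrite (bigD1 j) //= eqxx mulr1 big1 ?addr0 // => i ij.
  by rewrite eq_sym (negbTE ij) mulr0.
rewrite -(@sum_mul_nat_mem R E) -(@sum_enum_val R E).
by apply: eq_bigr => i _; rewrite mulrC.
Qed.

Lemma wdot_indicator_negL (X Y : {set E}) : wdot w (indicator R X *m L) (indicator R Y) =
  \sum_(y in Y) mu y * ((y \in X)%:R - \sum_(z in X) p y z).
Proof.
rewrite /wdot -(@sum_mul_nat_mem R E) -(@sum_enum_val R E).
by apply: eq_bigr => j _; rewrite indicator_negL !mxE /=; ring.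
Qed.

Lemma indicator_negL_orthogonal (X Y : {set E}) : [disjoint X & Y] ->
  (forall y z, y \in Y -> z \in X -> p y z = 0) ->
  wdot w (indicator R X *m L) (indicator R Y) = 0.
Proof.
move=> XY_disj YX_p0; rewrite wdot_indicator_negL big1 // => y yY.
rewrite (disjointFl XY_disj yY) big1 ?subrr ?mulr0 // => z zX.
exact: YX_p0.
Qed.

(* [<1_X L, 1_X>] is the [mu]-weighted flow into [X] from outside, and that
   flow only starts from points of [S]. *)
Lemma rayleigh_indicator_le (X S : {set E}) :
  (forall y z, y \in X -> z \notin X -> 0 < p z y -> z \in S) ->
  wdot w (indicator R X *m L) (indicator R X) <= msr mu S.
Proof.
move=> X_bdry; rewrite wdot_indicator_negL.
have -> : \sum_(y in X) mu y * ((y \in X)%:R - \sum_(z in X) p y z) =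
    \sum_(z | z \notin X) \sum_(y in X) p z y * mu z.
  rewrite exchange_big /=; apply: eq_bigr => y yX; rewrite yX.
  have := p_sum1 y; rewrite (bigID (mem X)) /= => p_split.
  rewrite -[1%:R]p_split addrAC subrr add0r mulr_sumr.
  by apply: eq_bigr => z _; rewrite mulrC p_rev.
apply: (@le_trans _ _ (\sum_(z | z \notin X) mu z * (z \in S)%:R)).
  apply: ler_sum => z zX; rewrite -mulr_suml mulrC ler_wpM2l //.
  case zS: (z \in S).
    by rewrite -(p_sum1 z) [X in _ <= X](bigID (mem X)) lerDl sumr_ge0.
  rewrite big1 // => y yX; apply/eqP; rewrite eq_le p_ge0 andbT leNgt.
  by apply/negP => /(X_bdry y z yX zX); rewrite zS.
rewrite /msr -sum_mul_nat_mem [X in _ <= X](bigID (fun z => z \notin X)) lerDl.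
by apply: sumr_ge0 => z _; rewrite mulr_ge0.
Qed.

(* [negL p] is [I - P] for the stochastic matrix [P], which contracts the
   l1 norm of row vectors. *)
Lemma negL_eigenvalue_ge0 a : eigenvalue (negL p) a -> 0 <= a.
Proof.
case/eigenvalueP => v vL v_neq0.
pose P : 'M[R]_#|E| := \matrix_(i, j) p (enum_val i) (enum_val j).
have vP : v *m P = (1 - a) *: v.
  have -> : P = 1%:M - negL p by apply/matrixP => i j; rewrite !mxE opprB addrC subrK.
  by rewrite mulmxBr mulmx1 vL scalerBl scale1r.
have abs_le j : `|1 - a| * `|v 0 j| <= \sum_i `|v 0 i| * p (enum_val i) (enum_val j).
  have -> : `|1 - a| * `|v 0 j| = `|(v *m P) 0 j| by rewrite vP mxE normrM.
  rewrite mxE; apply: le_trans (ler_norm_sum _ _ _) _.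
  by apply: ler_sum => i _; rewrite mxE normrM (ger0_norm (p_ge0 _ _)).
have v_norm_gt0 : 0 < \sum_j `|v 0 j|.
  rewrite lt_def sumr_ge0 // andbT; apply: contraNneq v_neq0 => /eqP.
  rewrite psumr_eq0 // => /allP v0; apply/eqP/rowP => j; rewrite mxE.
  by apply/eqP; rewrite -normr_eq0; apply: v0; rewrite mem_index_enum.
have : `|1 - a| * \sum_j `|v 0 j| <= \sum_j `|v 0 j|.
  rewrite mulr_sumr; apply: le_trans (ler_sum _ (fun j _ => abs_le j)) _.
  rewrite exchange_big /= le_eqVlt; apply/orP; left; apply/eqP.
  by apply: eq_bigr => i _; rewrite -mulr_sumr sum_enum_val p_sum1 mulr1.
rewrite -[X in _ <= X]mul1r (ler_pM2r v_norm_gt0) => /(le_trans (ler_norm _)).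
by rewrite lerBlDr lerDl.
Qed.

Lemma negL_eigenvalue_le_boundary (lam : seq R) (T : finType) (X : T -> {set E})
    (S : {set E}) k s :
  sorted <=%R lam -> char_poly (negL p) = \prod_(a <- lam) ('X - a%:P) ->
  (k < size lam)%N -> (k < #|T|)%N -> 0 < s -> (forall a, s <= msr mu (X a)) ->
  (forall a b, a != b -> [disjoint X a & X b]) ->
  (forall a b y z, a != b -> y \in X a -> z \in X b -> p y z = 0) ->
  (forall a y z, y \in X a -> z \notin X a -> 0 < p z y -> z \in S) ->
  nth 0 lam k * s <= msr mu S.
Proof.
move=> lam_sorted charL k_lam k_T s_gt0 X_ge X_disj X_p0 X_bdry.
rewrite -ler_pdivlMr //.
apply: (eigenvalue_le_rayleigh (f := fun a => indicator R (X a)) _ negL_selfadjoint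
  lam_sorted _ k_lam k_T) => [i|||a b ab|a b ab|a].
- exact: mu_gt0.
- by rewrite char_poly_trmx.
- move=> a; apply: contraTneq (lt_le_trans s_gt0 (X_ge a)) => X0.
  by have := wdot_indicator (X a) (X a); rewrite setIid X0 wdot0l => <-; rewrite ltxx.
- by rewrite wdot_indicator (disjoint_setI0 (X_disj a b ab)) /msr big_set0.
- apply: indicator_negL_orthogonal => [|y z yb za]; first exact: X_disj.
  by apply: (X_p0 b a); rewrite // eq_sym.
- rewrite wdot_indicator setIid; apply: le_trans (rayleigh_indicator_le (X_bdry a)) _.
  by rewrite mulrAC ler_pdivlMr // ler_wpM2l ?msr_ge0.
Qed.

End ReversibleChain.

Section SeparatedSets.
Variables (R : realType) (E : finType) (p : E -> E -> R) (mu : E -> R).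
Hypotheses (p_ge0 : forall x y, 0 <= p x y) (p_sum1 : forall x, \sum_y p x y = 1).
Hypotheses (p_irr : irreducible p) (mu_ge0 : forall x, 0 <= mu x).
Hypotheses (mu_sum1 : \sum_x mu x = 1) (p_rev : forall x y, p x y * mu x = p y x * mu y).
Variables (lam : seq R) (k : nat) (A : 'I_k -> {set E}) (n : nat).
Hypotheses (lam_sorted : sorted <=%R lam)
  (charL : char_poly (negL p) = \prod_(a <- lam) ('X - a%:P)) (k_lam : (k < size lam)%N).
Hypotheses (A_sep : forall i j, i != j -> forall a b, a \in A i -> b \in A j ->
    (1 <= gdist p a b)%N)
  (A_delta : inDelta (fun i => msr mu (A i)))
  (A_far : forall i j, i != j -> forall a b, a \in A i -> b \in A j ->
    (2 * n <= gdist p a b)%N).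

Local Notation B := (\bigcup_i A i).
Let p_sym := prel_sym p_irr mu_ge0 mu_sum1 p_rev.

Lemma msr_bigcup_separated : msr mu B = \sum_i msr mu (A i).
Proof.
apply: msr_bigcup => i j ij; rewrite disjoints_subset; apply/subsetP => x xi.
by rewrite inE; apply/negP => xj; have := A_sep ij xi xj; rewrite gdistxx.
Qed.

(* The [k + 1] test sets of the min-max principle at radius [m]. *)
Definition layer m (a : option 'I_k) : {set E} :=
  if a is Some i then nbhd p (A i) m else ~: nbhd p B m.+1.

Lemma nbhd_bigcup_succ m i y z :
  z \in nbhd p (A i) m -> (gdist p y z <= 1)%N -> y \in nbhd p B m.+1.
Proof.
move=> zAi yz; have AiB : A i \subset B by apply: bigcup_sup.
by apply: (subsetP (nbhdS p _ AiB)); rewrite -add1n; apply: (nbhd_gdist p_irr zAi yz).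
Qed.

Lemma layer_far m a b y z : (m < n)%N -> a != b ->
  y \in layer m a -> z \in layer m b -> (2 <= gdist p y z)%N.
Proof.
move=> m_lt; case: a b => [i|] [j|] //= ab.
- rewrite (inj_eq Some_inj) in ab.
  by apply: (nbhd_far p_irr p_sym) m_lt => // a' b'; exact: A_far.
- rewrite in_setC ltnNge => yAi; apply: contra => yz.
  by apply: nbhd_bigcup_succ yAi _; rewrite (gdistC p_irr p_sym).
- by rewrite in_setC ltnNge => yB zAj; apply: contra yB; exact: nbhd_bigcup_succ zAj.
Qed.

Lemma layer_boundary m a y z : (m < n)%N ->
  y \in layer m a -> z \notin layer m a -> 0 < p z y ->
  z \in nbhd p B m.+1 :\: nbhd p B m.
Proof.
move=> m_lt yX zX /gdist_prel zy.
have yz : (gdist p y z <= 1)%N by rewrite (gdistC p_irr p_sym).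
case: a yX zX => [i|] /= yX zX; rewrite inE.
- rewrite (nbhd_bigcup_succ yX zy) andbT nbhd_bigcup.
  apply/bigcupP => -[j _ zAj]; have [ij|ij] := eqVneq i j.
    by move: zX; rewrite ij zAj.
  have ij' : Some i != Some j by rewrite (inj_eq Some_inj).
  by have := layer_far m_lt ij' yX zAj; rewrite leqNgt ltnS yz.
rewrite in_setC negbK in zX; rewrite zX andbT; rewrite in_setC in yX.
by apply: contra yX => zBm; rewrite -add1n; apply: (nbhd_gdist p_irr zBm yz).
Qed.

Lemma layer_msr_ge m a : msr mu (~: nbhd p B m.+1) <= msr mu (layer m a).
Proof.
case: a => [i|] //=; rewrite msr_setC //.
have := A_delta.2.2 i; rewrite /= -msr_bigcup_separated.
have := msr_le mu_ge0 (subset_nbhd p B m.+1).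
have := msr_le mu_ge0 (subset_nbhd p (A i) m); lra.
Qed.

Lemma layer_disjoint m a b : (m < n)%N -> a != b -> [disjoint layer m a & layer m b].
Proof.
move=> m_lt ab; rewrite disjoints_subset; apply/subsetP => x xa; rewrite inE.
by apply/negP => xb; have := layer_far m_lt ab xa xb; rewrite gdistxx.
Qed.

Lemma layer_p_eq0 m a b y z : (m < n)%N -> a != b ->
  y \in layer m a -> z \in layer m b -> p y z = 0.
Proof.
move=> m_lt ab ya zb; apply/eqP; rewrite eq_le p_ge0 andbT leNgt.
by apply/negP => /gdist_prel; rewrite leqNgt (layer_far m_lt ab ya zb).
Qed.

Lemma nbhd_step m : (m < n)%N ->
  (1 + nth 0 lam k) * (1 - msr mu (nbhd p B m.+1)) <= 1 - msr mu (nbhd p B m).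
Proof.
move=> m_lt; rewrite -msr_setC //; set s := msr mu (~: _).
have [s0|s_neq0] := eqVneq s 0; first by rewrite s0 mulr0 subr_ge0 msr_le1.
have s_gt0 : 0 < s by rewrite lt_def s_neq0 msr_ge0.
have k_layers : (k < #|{: option 'I_k}|)%N by rewrite card_option card_ord.
have := negL_eigenvalue_le_boundary p_ge0 p_sum1 p_irr mu_ge0 mu_sum1 p_rev
  lam_sorted charL k_lam k_layers s_gt0 (layer_msr_ge m)
  (fun a b => layer_disjoint m_lt) (fun a b y z => layer_p_eq0 m_lt)
  (fun a y z => @layer_boundary m a y z m_lt).
by rewrite msr_setD ?le_nbhd // /s msr_setC //; lra.
Qed.

Lemma nth_lam_ge0 : 0 <= nth 0 lam k.
Proof.
apply: (negL_eigenvalue_ge0 p_ge0 p_sum1).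
by rewrite eigenvalue_root_char charL root_prod_XsubC mem_nth.
Qed.

Lemma nbhd_iter m : (m <= n)%N ->
  (1 + nth 0 lam k) ^+ m * (1 - msr mu (nbhd p B m)) <= 1 - msr mu B.
Proof.
have lam_ge0 := nth_lam_ge0.
elim: m => [|m IHm] m_le.
  by rewrite expr0 mul1r lerB // msr_le // subset_nbhd.
apply: le_trans (IHm (ltnW m_le)); rewrite exprSr -mulrA ler_wpM2l ?nbhd_step //.
by rewrite exprn_ge0 // addr_ge0.
Qed.

End SeparatedSets.

Theorem theorem3p1 (R : realType) (E : finType) (p : E -> E -> R) (mu : E -> R)
  (hp0 : forall x y, 0 <= p x y) (hp1 : forall x, \sum_y p x y = 1)
  (hirr : irreducible p)
  (hmu0 : forall x, 0 <= mu x) (hmu1 : \sum_x mu x = 1)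
  (hrev : forall x y, p x y * mu x = p y x * mu y)
  (lam : seq R) (hsort : sorted <=%R lam)
  (hspec : char_poly (negL p) = \prod_(a <- lam) ('X - a%:P))
  (k : nat) (hk1 : (1 <= k)%N) (hkE : (k < size lam)%N)
  (A : 'I_k -> {set E})
  (hsep : forall i j, i != j -> forall a b, a \in A i -> b \in A j ->
            (1 <= gdist p a b)%N)
  (hdelta : inDelta (fun i => msr mu (A i)))
  (n : nat) (hn1 : (1 <= n)%N)
  (hn2 : forall i j, i != j -> forall a b, a \in A i -> b \in A j ->
            (2 * n <= gdist p a b)%N) :
  1 - (1 - msr mu (\bigcup_i A i)) * (1 + nth 0 lam k) ^- n
    <= msr mu (nbhd p (\bigcup_i A i) n).
Proof.
have lam_ge0 := nth_lam_ge0 hp0 hp1 hspec hkE.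
have q_gt0 : 0 < (1 + nth 0 lam k) ^+ n by apply: exprn_gt0; lra.
have := nbhd_iter hp0 hp1 hirr hmu0 hmu1 hrev hsort hspec hkE hsep hdelta hn2 (leqnn n).
rewrite mulrC -ler_pdivlMr // => iter_bound; lra.
Qed.
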